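(* Suppose the current syndrome satisfies $\emptyset\ne\sigma\subseteq\{v_1\}\times C_2$ for a fixed $v_1\in V_1$. Let $(c_1,v_2)\in C_1\times V_2$ be a $Z$-type generator whose local view meets the syndrome, $(\Gamma(c_1)\times\Gamma(v_2))\cap\sigma\neq\emptyset$, and let $F\subseteq\mathrm{supp}(c_1,v_2)$ be non-empty with $F\cap(\{v_1\}\times V_2)=\emptyset$. Then $F$ is not flipped by Small-Set-Flip: whenever $\max_{F'\in\mathcal F}\mathrm{score}(F')>0$, one has $\mathrm{score}(F)<\max_{F'\in\mathcal F}\mathrm{score}(F')$.
   Context: Let $G=(V\cup C,E)$ be a connected $(\Delta_V,\Delta_C)$-biregular bipartite graph with $\Delta_V,\Delta_C\ge 2$, $\Gamma(x)$ the neighbourhood of a vertex $x$, and $G_1=(V_1\cup C_1,E_1)$, $G_2=(V_2\cup C_2,E_2)$ two copies of $G$. The hypergraph product code has qubits $Q=V_1\times V_2\sqcup C_1\times C_2$; $X$-type checks indexed by $V_1\times C_2$, check $(v,c)$ acting on $\{v\}\times\Gamma(c)\sqcup\Gamma(v)\times\{c\}$; $Z$-type generators indexed by $C_1\times V_2$, generator $(c,v)$ with support $\mathrm{supp}(c,v)=\Gamma(c)\times\{v\}\sqcup\{c\}\times\Gamma(v)$. The local view of $(c,v)$ is $\Gamma(c)\times\Gamma(v)$. For $F\subseteq Q$, $\sigma(F)$ is the set of checks acting on an odd number of qubits of $F$; $\sigma$ is the current set of unsatisfied checks. $\mathcal F=\{F: F\subseteq\mathrm{supp}(c,v)\text{ for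 some }(c,v)\in C_1\times V_2\}$. For $F\ne\emptyset$, $\mathrm{score}(F)=(|\sigma|-|\sigma\triangle\sigma(F)|)/|F|$, and $\mathrm{score}(\emptyset)=0$. Small-Set-Flip in each iteration flips a set of $\mathcal F$ of maximum score, provided that maximum is positive. *)

From mathcomp Require Import all_boot all_order all_algebra.
Set Implicit Arguments. Unset Strict Implicit. Unset Printing Implicit Defensive.
Import Order.TTheory GRing.Theory Num.Theory.

(* A bipartite graph G = (V ∪ C, E) is given by adj : V -> C -> bool,
   adj v c <=> {v,c} ∈ E.  Gamma(v) = [set c | adj v c], Gamma(c) = [set v | adj v c].
   Both copies G1, G2 are the same graph, so V1 = V2 = V and C1 = C2 = C. *)

Section HGP.
Variables (V C : finType) (adj : V -> C -> bool).

Definition nbV (v : V) : {set C} := [set c | adj v c].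
Definition nbC (c : C) : {set V} := [set v | adj v c].

Definition biregular (dV dC : nat) : Prop :=
  (forall v, #|nbV v| = dV) /\ (forall c, #|nbC c| = dC).

Definition brel : rel (V + C) := fun x y =>
  match x, y with
  | inl v, inr c => adj v c
  | inr c, inl v => adj v c
  | _, _ => false
  end.
Definition bconnected : Prop := forall x y : V + C, connect brel x y.

(* qubits Q = V1 x V2 ⊔ C1 x C2 ; X-checks V1 x C2 ; Z-generators C1 x V2 *)
Definition qubit := ((V * V) + (C * C))%type.
Definition xcheck := (V * C)%type.
Definition zgen := (C * V)%type.

Definition acts (x : xcheck) (q : qubit) : bool :=
  match q with
  | inl (a, b) => (a == x.1) && adj b x.2
  | inr (a, b) => (b == x.2) && adj x.1 a
  end.

Definition zsupp (z : zgen) : {set qubit} :=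
  [set q | match q with
           | inl (a, b) => adj a z.1 && (b == z.2)
           | inr (a, b) => (a == z.1) && adj z.2 b
           end].

Definition localview (z : zgen) : {set xcheck} :=
  [set x | adj x.1 z.1 && adj z.2 x.2].

Definition synd (F : {set qubit}) : {set xcheck} :=
  [set x | odd #|[set q in F | acts x q]|].

Definition inFamily (F : {set qubit}) : bool := [exists z, F \subset zsupp z].

Definition symdiff (A B : {set xcheck}) : {set xcheck} := (A :\: B) :|: (B :\: A).

Definition score (sigma : {set xcheck}) (F : {set qubit}) : rat :=
  if F == set0 then 0%R
  else ((#|sigma|%:Q - #|symdiff sigma (synd F)|%:Q) / #|F|%:Q)%R.

(* max over the (finite, nonempty: contains set0) family of score *)
Definition maxscore (sigma : {set xcheck}) : rat :=
  \big[Num.max/0%R]_(F : {set qubit} | inFamily F) score sigma F.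

End HGP.

(* Since sigma lies in the row {v1} x C, a set F inside supp(c1, v2) avoiding
   that row meets sigma only through its qubits (c1, y); hence
   |sigma ∩ sigma(F)| is bounded both by |sigma ∩ sigma({(v1, v2)})| and by
   #{y | (c1, y) ∈ F}.  If F has no qubit (a, v2), then sigma(F) contains
   Gamma(c1) x {y | (c1, y) ∈ F}, which is at least twice that large, so
   score F <= 0.  Otherwise |sigma(F)| >= |Gamma(v2)| = |sigma({(v1, v2)})|
   and a positive score forces |F| >= 2, so score F is less than the score of
   the single qubit (v1, v2), which belongs to the family because
   v1 ∈ Gamma(c1). *)

From mathcomp Require Import all_boot all_order all_algebra.
From mathcomp Require Import zify lra.
Import Order.TTheory GRing.Theory Num.Theory.
Set Implicit Arguments. Unset Strict Implicit. Unset Printing Implicit Defensive.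

Lemma card_symdiff (V C : finType) (A B : {set xcheck V C}) :
  #|symdiff A B| + 2 * #|A :&: B| = #|A| + #|B|.
Proof.
have disj : (A :\: B) :&: (B :\: A) = set0.
  by apply/setP => x; rewrite !inE; case: (x \in A); case: (x \in B).
have := cardsUI (A :\: B) (B :\: A); rewrite disj cards0 addn0 /symdiff => ->.
have := cardsID B A; have := cardsID A B; rewrite setIC; lia.
Qed.

Lemma ltr_pdiv_ge2 (R : realFieldType) (x y f : R) :
  (0 < x -> x <= y -> 2 <= f -> x / f < y)%R.
Proof.
move=> x_gt0 x_le_y f_ge2; apply: (lt_le_trans _ x_le_y).
rewrite ltr_pdivrMr; last by apply: lt_le_trans f_ge2.
nra.
Qed.

Lemma card_set1_sel (T : finType) (A : {set T}) (a : T) (P : bool) :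
  #|[set q in A | (q == a) && P]| = (a \in A) && P.
Proof.
rewrite (cardsD1 a) !inE eqxx (_ : _ :\ a = set0) ?cards0 ?addn0 ?andbT //.
by apply/setP => q; rewrite !inE; case: eqP; rewrite ?andbF.
Qed.

Lemma card_set_pair (T : finType) (A : {set T}) (a b : T) (P Q : bool) :
  a != b ->
  #|[set q in A | ((q == a) && P) || ((q == b) && Q)]| =
  ((a \in A) && P) + ((b \in A) && Q).
Proof.
move=> neq_ab.
have -> : [set q in A | ((q == a) && P) || ((q == b) && Q)] =
          [set q in A | (q == a) && P] :|: [set q in A | (q == b) && Q].
  by apply/setP => q; rewrite !inE andb_orr.
have disj : [set q in A | (q == a) && P] :&: [set q in A | (q == b) && Q] = set0.
  apply/setP => q; rewrite !inE.
  by case: (eqVneq q a) => [->|]; rewrite ?(negbTE neq_ab) ?andbF.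
have := cardsUI [set q in A | (q == a) && P] [set q in A | (q == b) && Q].
rewrite disj cards0 addn0 => ->.
by rewrite !card_set1_sel.
Qed.

Section ZGenerator.
Variables (V C : finType) (adj : V -> C -> bool).

Lemma acts_zsupp {c : C} {v : V} (x : V) (y : C) {q : qubit V C} :
  q \in zsupp adj (c, v) ->
  acts adj (x, y) q = ((q == inl (x, v)) && adj v y) || ((q == inr (c, y)) && adj x c).
Proof.
case: q => -[a b]; rewrite inE /=.
  by case/andP=> _ /eqP ->; rewrite (inj_eq inl_inj) xpair_eqE eqxx andbT orbF.
by case/andP=> /eqP -> _; rewrite (inj_eq inr_inj) xpair_eqE eqxx.
Qed.

Lemma synd_zsupp (c : C) (v : V) (F : {set qubit V C}) (x : V) (y : C) :
  F \subset zsupp adj (c, v) ->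
  ((x, y) \in synd adj F) =
  ((inl (x, v) \in F) && adj v y) (+) ((inr (c, y) \in F) && adj x c).
Proof.
move=> sF; rewrite inE.
have -> : [set q in F | acts adj (x, y) q] =
          [set q in F | ((q == inl (x, v)) && adj v y) || ((q == inr (c, y)) && adj x c)].
  by apply/setP => q; rewrite !inE; case qF: (q \in F); rewrite //= (acts_zsupp x y (subsetP sF q qF)).
by rewrite card_set_pair // oddD !oddb.
Qed.

Lemma synd_set1_inl (a b : V) :
  synd adj [set inl (a, b)] = setX [set a] (nbV adj b).
Proof.
apply/setP => -[x y]; rewrite in_setX !inE.
have -> : [set q in [set inl (a, b)] | acts adj (x, y) q] =
          [set q in [set inl (a, b)] | (q == inl (a, b)) && acts adj (x, y) (inl (a, b))].
  by apply/setP => q; rewrite !inE; case: eqP => // ->.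
by rewrite card_set1_sel inE eqxx oddb /= eq_sym.
Qed.

Lemma scoreE (sigma : {set xcheck V C}) (F : {set qubit V C}) :
  score adj sigma F =
  ((2 * #|sigma :&: synd adj F|%:R - #|synd adj F|%:R) / #|F|%:R)%R.
Proof.
rewrite /score; case: eqP => [->|_]; first by rewrite cards0 invr0 mulr0.
congr (_ / _)%R.
have /(congr1 (fun n : nat => n%:R : rat)) := card_symdiff sigma (synd adj F).
rewrite !natrD => card_eq; lra.
Qed.

Lemma score_le_maxscore (sigma : {set xcheck V C}) (F : {set qubit V C}) :
  inFamily adj F -> (score adj sigma F <= maxscore adj sigma)%R.
Proof. by move=> inF; rewrite /maxscore (bigD1 F) //= le_max lexx. Qed.

End ZGenerator.

Section SyndromeInOneRow.
Variables (V C : finType) (adj : V -> C -> bool).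
Variables (sigma : {set xcheck V C}) (v1 v2 : V) (c1 : C) (F : {set qubit V C}).
Hypothesis sigma_row : forall x, x \in sigma -> x.1 = v1.
Hypothesis adj_v1c1 : adj v1 c1.
Hypothesis F_zsupp : F \subset zsupp adj (c1, v2).
Hypothesis F_row : forall v, inl (v1, v) \notin F.

Let Fc : {set C} := [set y | inr (c1, y) \in F].

Lemma Fc_nbV : Fc \subset nbV adj v2.
Proof.
by apply/subsetP => y; rewrite !inE => /(subsetP F_zsupp); rewrite inE => /andP[].
Qed.

Lemma sigma_synd_row : sigma :&: synd adj F \subset setX [set v1] Fc.
Proof.
apply/subsetP => -[x y]; rewrite in_setI => /andP[/sigma_row /= -> {x}].
rewrite (synd_zsupp _ _ F_zsupp) (negbTE (F_row v2)) => /andP[yFc _].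
by rewrite in_setX in_set1 eqxx inE.
Qed.

Lemma sigma_synd_sub_inl : sigma :&: synd adj F \subset sigma :&: synd adj [set inl (v1, v2)].
Proof.
apply/subsetP => -[x y] xy_in; move: (xy_in) (subsetP sigma_synd_row _ xy_in).
rewrite in_setI in_setX in_set1 => /andP[xy_sigma _] /andP[/eqP x_v1 yFc].
by rewrite in_setI xy_sigma synd_set1_inl in_setX in_set1 x_v1 eqxx (subsetP Fc_nbV).
Qed.

Lemma card_nbV_le_synd (a : V) :
  inl (a, v2) \in F -> #|nbV adj v2| <= #|synd adj F|.
Proof.
move=> aF.
(* [(v1, y)] is flipped through [(c1, y)], [(a, y)] through [(a, v2)]. *)
pose row y := if y \in Fc then (v1, y) else (a, y).
have row_inj : injective row by move=> y y' /(congr1 snd); rewrite /row; do 2 case: ifP.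
rewrite -(card_imset _ row_inj); apply/subset_leq_card/subsetP => _ /imsetP[y y_nb ->].
rewrite /row; case: ifP => yFc; rewrite inE in yFc; rewrite (synd_zsupp _ _ F_zsupp) yFc.
  by rewrite (negbTE (F_row v2)) adj_v1c1.
by rewrite inE in y_nb; rewrite aF y_nb.
Qed.

Lemma card_nbC_Fc_le_synd :
  (forall a, inl (a, v2) \notin F) -> #|nbC adj c1| * #|Fc| <= #|synd adj F|.
Proof.
move=> no_inl; rewrite -cardsX; apply/subset_leq_card/subsetP => -[x y].
rewrite in_setX (synd_zsupp _ _ F_zsupp) (negbTE (no_inl x)) !inE.
by case/andP=> -> ->.
Qed.

Lemma score_lt_score_inl :
  2 <= #|nbC adj c1| -> F != set0 -> (0 < score adj sigma F)%R ->
  (score adj sigma F < score adj sigma [set inl (v1, v2)])%R.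
Proof.
move=> deg_c1 F_ne; rewrite !scoreE synd_set1_inl cardsX !cards1 mul1n divr1.
have F_gt0 : 0 < #|F| by rewrite card_gt0.
have k_le_k0 := subset_leq_card sigma_synd_sub_inl; rewrite synd_set1_inl in k_le_k0.
have k_le_Fc : #|sigma :&: synd adj F| <= #|Fc|.
  by rewrite -[#|Fc|]mul1n -(cards1 v1) -cardsX subset_leq_card ?sigma_synd_row.
rewrite ltr_pdivlMr ?ltr0n // mul0r => pos.
have s_lt_2k : #|synd adj F| < 2 * #|sigma :&: synd adj F|.
  by rewrite -(ltr_nat rat) natrM; lra.
case: (boolP [exists a, inl (a, v2) \in F]) => [/existsP[a aF] | /existsPn no_inl]; last first.
  by have := card_nbC_Fc_le_synd no_inl; nia.
have d_le_s := card_nbV_le_synd aF.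
have [y yFc] : exists y, y \in Fc by apply/set0Pn; rewrite -card_gt0; lia.
have F_ge2 : 2 <= #|F|.
  rewrite -(cards2 (inl (a, v2)) (inr (c1, y))); apply/subset_leq_card/subsetP => q.
  by rewrite !inE in yFc *; case/orP => /eqP ->.
apply: ltr_pdiv_ge2; rewrite // ?(ler_nat rat 2) //.
by rewrite -!(ler_nat rat) in k_le_k0 d_le_s; lra.
Qed.

End SyndromeInOneRow.

Theorem claim2 (V C : finType) (adj : V -> C -> bool) (dV dC : nat) :
  (2 <= dV)%N -> (2 <= dC)%N ->
  biregular adj dV dC -> bconnected adj ->
  forall (sigma : {set xcheck V C}) (v1 : V),
  sigma != set0 ->
  (forall x, x \in sigma -> x.1 = v1) ->
  forall (c1 : C) (v2 : V) (F : {set qubit V C}),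
  localview adj (c1, v2) :&: sigma != set0 ->
  F \subset zsupp adj (c1, v2) ->
  F != set0 ->
  (forall v : V, inl (v1, v) \notin F) ->
  (0 < maxscore adj sigma)%R ->
  (score adj sigma F < maxscore adj sigma)%R.
Proof.
move=> _ dC_ge2 [_ deg_C] _ sigma v1 _ sigma_row c1 v2 F meets F_zsupp F_ne F_row max_gt0.
have adj_v1c1 : adj v1 c1.
  case/set0Pn: meets => -[x y]; rewrite !inE /= => /andP[/andP[x_c1 _] /sigma_row /= x_v1].
  by rewrite -x_v1.
have inl_family : inFamily adj [set inl (v1, v2)].
  by apply/existsP; exists (c1, v2); rewrite sub1set inE /= adj_v1c1 eqxx.
case: (lerP (score adj sigma F) 0) => [score_le0 | score_gt0].
  exact: le_lt_trans score_le0 max_gt0.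
apply: lt_le_trans (score_le_maxscore _ inl_family).
by apply: (score_lt_score_inl sigma_row adj_v1c1 F_zsupp F_row); rewrite ?deg_C.
Qed.
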